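(* Let $E$ be a finite set and $\mathscr C$ a collection of nonempty, pairwise incomparable (under inclusion) subsets of $E$. Then $\mathscr C$ is the set of circuits of a matroid on $E$ if and only if $\mathscr C$ satisfies the following axiom (C3)$''$: whenever $C_1,C_2\in\mathscr C$ with $e_1\in C_1-C_2$, $e_2\in C_2-C_1$, $e\in C_1\cap C_2$, and $(C_1-e_1)\cup(C_2-e_2)$ contains no member of $\mathscr C$, there is $C_3\in\mathscr C$ with $\{e_1,e_2\}\subseteq C_3\subseteq (C_1\cup C_2)-e$. *)

From mathcomp Require Import all_boot.
Set Implicit Arguments. Unset Strict Implicit. Unset Printing Implicit Defensive.

Definition is_matroid (E : finType) (I : {set {set E}}) : Prop :=
  [/\ set0 \in I,
      (forall A B : {set E}, B \in I -> A \subset B -> A \in I) &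
      (forall A B : {set E}, A \in I -> B \in I -> #|A| < #|B| ->
         exists2 e, e \in B :\: A & e |: A \in I)].

Definition circuits (E : finType) (I : {set {set E}}) : {set {set E}} :=
  [set C : {set E} | (C \notin I) &&
     [forall D : {set E}, (D \proper C) ==> (D \in I)]].

Definition C3pp (E : finType) (Cs : {set {set E}}) : Prop :=
  forall (C1 C2 : {set E}) (e1 e2 e : E),
    C1 \in Cs -> C2 \in Cs ->
    e1 \in C1 :\: C2 -> e2 \in C2 :\: C1 -> e \in C1 :&: C2 ->
    (forall C : {set E}, C \in Cs -> ~~ (C \subset (C1 :\ e1) :|: (C2 :\ e2))) ->
    exists2 C3, C3 \in Cs & [set e1; e2] \subset C3 /\ C3 \subset (C1 :|: C2) :\ e.

From mathcomp Require Import all_boot zify.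
Set Implicit Arguments. Unset Strict Implicit. Unset Printing Implicit Defensive.

(* Forward: [Y := (C1 - e1) + (C2 - e2)] is independent, and [C1], [C2] are the
   unique circuits of [Y + e1], [Y + e2]; so deleting [e] from either leaves an
   independent set.  The set [X := (Y + e1 + e2) - e] is dependent, since
   otherwise [C1] and [C2] would be two circuits of [X + e]; a circuit in [X]
   must then contain both [e1] and [e2].
   Backward: take as independent sets those containing no member of [Cs].
   (C3)'' yields weak circuit elimination by induction on [|C1 + C2|], and weak
   elimination yields the augmentation axiom. *)

Lemma setD1_subsetU1 (T : finType) (S A : {set T}) x y :
  S \subset y |: A -> S :\ x \subset y |: (A :\ x).
Proof.
move=> SyA; apply/subsetP => z; rewrite !inE => /andP [zx /(subsetP SyA)].
by rewrite !inE zx.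
Qed.

Section MatroidCircuits.
Variables (E : finType) (I : {set {set E}}).

Lemma circuitP (C : {set E}) :
  reflect (C \notin I /\ forall D : {set E}, D \proper C -> D \in I) (C \in circuits I).
Proof.
rewrite inE; apply: (iffP andP) => [[CI /forallP minC]|[CI minC]]; split => //.
  by move=> D /(implyP (minC D)).
by apply/forallP => D; apply/implyP/minC.
Qed.

Lemma dependent_has_circuit (S : {set E}) :
  S \notin I -> exists2 C, C \in circuits I & C \subset S.
Proof.
move=> SI; have [C minC CS] := minset_exists (P := [pred B | B \notin I]) SI.
exists C => //; apply/circuitP; split; first exact: minsetp minC.
move=> D DC; apply/contraT => DI.
by move: (DC); rewrite (minsetinf minC DI (proper_sub DC)) properxx.
Qed.

Hypothesis matroid_I : is_matroid I.

Lemma indep_sub (A B : {set E}) : B \in I -> A \subset B -> A \in I.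
Proof. by case: matroid_I => _ subI _; apply: subI. Qed.

Lemma circuit_sub_dep (C S : {set E}) : C \in circuits I -> C \subset S -> S \notin I.
Proof.
by case/circuitP => CI _ CS; apply: contra CI => SI; apply: indep_sub SI CS.
Qed.

Lemma indep_extend (A J S : {set E}) :
  A \in I -> J \in I -> A \subset S -> J \subset S -> #|A| <= #|J| ->
  exists B, [/\ B \in I, A \subset B, B \subset S & #|B| = #|J|].
Proof.
move=> + JI + JS; have [n] := ubnP (#|J| - #|A|); elim: n A => // n IH A ltn AI AS.
rewrite leq_eqVlt => /orP [/eqP eqAJ | ltAJ]; first by exists A.
case: matroid_I => _ _ /(_ A J AI JI ltAJ) [e]; rewrite inE => /andP [eA eJ] eAI.
have [|||B [BI eAB BS cardB]] := IH (e |: A) _ eAI.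
- by rewrite cardsU1 eA; lia.
- by rewrite subUset sub1set (subsetP JS) ?AS.
- by rewrite cardsU1 eA.
by exists B; split=> //; apply: subset_trans eAB; apply: subsetUr.
Qed.

(* Extending [C - y] inside [x + Y] to an independent [B] of size [|Y|] must
   avoid [y], so [B = (x + Y) - y], which contains any circuit missing [y]. *)
Lemma circuit_unique (Y : {set E}) x (C C' : {set E}) :
  Y \in I -> C \in circuits I -> C' \in circuits I ->
  C \subset x |: Y -> C' \subset x |: Y -> C = C'.
Proof.
move=> YI circC circC' CxY C'xY.
have xY : x \notin Y.
  apply: contraTN YI => xY; apply: circuit_sub_dep circC (subset_trans CxY _).
  by rewrite subUset sub1set xY subxx.
have CC' : C \subset C'.
  apply/subsetP => y yC; apply/contraT => yC'.
  have /circuitP [_ minC] := circC.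
  have [||B [BI CyB BS cardB]] :=
    indep_extend (minC _ (properD1 yC)) YI _ (subsetUr [set x] Y).
  - exact: subset_trans (subD1set C y) CxY.
  - have := subset_leq_card CxY; rewrite cardsU1 xY (cardsD1 y C) yC; lia.
  have yB : y \notin B.
    apply: contraTN BI => yB; apply: circuit_sub_dep circC _.
    by rewrite -(setD1K yC) subUset sub1set yB CyB.
  have BxYy : B = (x |: Y) :\ y.
    apply/eqP; rewrite eqEcard subsetD1 BS yB cardB.
    by have := cardsD1 y (x |: Y); rewrite cardsU1 xY (subsetP CxY _ yC); lia.
  have : B \notin I by apply: circuit_sub_dep circC' _; rewrite BxYy subsetD1 C'xY.
  by rewrite BI.
apply/eqP; apply/contraT => neqC.
have /circuitP [CI _] := circC; have /circuitP [_ minC'] := circC'.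
by rewrite minC' ?properEneq ?neqC in CI.
Qed.

Lemma circuit_mem_setU1 (C S : {set E}) x :
  C \in circuits I -> S \in I -> C \subset x |: S -> x \in C.
Proof.
move=> circC SI CxS; apply: contraLR SI => xC; apply: circuit_sub_dep circC _.
apply: subset_trans (_ : C \subset (x |: S) :\ x) _; first by rewrite subsetD1 CxS.
by rewrite setDUl setDv set0U subD1set.
Qed.

Lemma indep_setU1D1 (Y : {set E}) x (C : {set E}) e :
  Y \in I -> C \in circuits I -> C \subset x |: Y -> e \in C -> (x |: Y) :\ e \in I.
Proof.
move=> YI circC CxY eC; apply/contraT => /dependent_has_circuit [C' circC' C'xYe].
have C'xY := subset_trans C'xYe (subD1set _ _).
by move: C'xYe; rewrite subsetD1 (circuit_unique YI circC' circC C'xY CxY) eC andbF.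
Qed.

Lemma circuits_C3pp : C3pp (circuits I).
Proof.
move=> C1 C2 e1 e2 e circC1 circC2.
rewrite !inE => /andP [e1C2 e1C1] /andP [e2C1 e2C2] /andP [eC1 eC2] noC.
have ee1 : e != e1 by apply: contraNneq e1C2 => <-.
have ee2 : e != e2 by apply: contraNneq e2C1 => <-.
set Y := (C1 :\ e1) :|: (C2 :\ e2).
have YI : Y \in I.
  by apply/contraT => /dependent_has_circuit [C /noC /negP].
have C1Y : C1 \subset e1 |: Y by rewrite -{1}(setD1K e1C1) setUS ?subsetUl.
have C2Y : C2 \subset e2 |: Y by rewrite -{1}(setD1K e2C2) setUS ?subsetUr.
set X := e2 |: ((e1 |: Y) :\ e).
have XI : X \notin I.
  apply/negP => XI.
  have e1YX : e1 |: Y \subset e |: X.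
    have eY : e \in e1 |: Y by rewrite !inE ee1 eC1 orbT.
    by rewrite -{1}(setD1K eY) setUS ?subsetU1.
  have C1X := subset_trans C1Y e1YX.
  have C2X : C2 \subset e |: X.
    apply: subset_trans C2Y _; rewrite subUset sub1set !inE eqxx orbT /=.
    exact: subset_trans (subsetU1 e1 Y) e1YX.
  by move: e1C1; rewrite (circuit_unique XI circC1 circC2 C1X C2X) (negbTE e1C2).
have [C3 circC3 C3X] := dependent_has_circuit XI.
have Y1I := indep_setU1D1 YI circC1 C1Y eC1.
have Y2I := indep_setU1D1 YI circC2 C2Y eC2.
exists C3 => //; split.
  have XY2 : X \subset e1 |: ((e2 |: Y) :\ e).
    apply/subsetP => z; rewrite !inE => /orP [/eqP-> | /andP [-> /orP [-> | ->]]].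
    - by rewrite [e2 == e]eq_sym ee2 eqxx orbT.
    - by [].
    - by rewrite !orbT.
  rewrite subUset !sub1set (circuit_mem_setU1 circC3 Y1I C3X) andbT.
  exact: circuit_mem_setU1 circC3 Y2I (subset_trans C3X XY2).
apply: subset_trans C3X _; rewrite subsetD1 !inE negb_or ee2 eqxx /= andbT.
rewrite subUset sub1set inE e2C2 orbT /=.
apply: subset_trans (subD1set _ _) _.
by rewrite subUset sub1set inE e1C1 setUSS ?subD1set.
Qed.

End MatroidCircuits.

Definition indep_of (E : finType) (Cs : {set {set E}}) : {set {set E}} :=
  [set A : {set E} | [forall C in Cs, ~~ (C \subset A)]].

Section IndepOfClutter.
Variables (E : finType) (Cs : {set {set E}}).

Lemma indep_ofP (A : {set E}) :
  reflect (forall C, C \in Cs -> ~~ (C \subset A)) (A \in indep_of Cs).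
Proof. by rewrite inE; apply: forall_inP. Qed.

Lemma indep_ofPn (A : {set E}) :
  reflect (exists2 C, C \in Cs & C \subset A) (A \notin indep_of Cs).
Proof.
rewrite inE negb_forall_in.
by apply: (iffP exists_inP) => -[C CCs CA]; exists C; rewrite ?negbK in CA *.
Qed.

Lemma indep_of_sub (A B : {set E}) :
  B \in indep_of Cs -> A \subset B -> A \in indep_of Cs.
Proof.
move=> /indep_ofP indB AB; apply/indep_ofP => C CCs.
by apply: contra (indB C CCs) => CA; apply: subset_trans CA AB.
Qed.

Lemma indep_of_setU1_dep (A : {set E}) e :
  A \in indep_of Cs -> e |: A \notin indep_of Cs ->
  exists2 C, C \in Cs & e \in C /\ C \subset e |: A.
Proof.
move=> /indep_ofP indA /indep_ofPn [C CCs CeA]; exists C => //; split=> //.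
apply: contraLR (indA C CCs) => eC; rewrite negbK.
apply: subset_trans (_ : C \subset (e |: A) :\ e) _; first by rewrite subsetD1 CeA.
by rewrite setDUl setDv set0U subD1set.
Qed.

Hypothesis Cs_antichain :
  forall C D : {set E}, C \in Cs -> D \in Cs -> C \subset D -> C = D.

Lemma circuits_indep_of : circuits (indep_of Cs) = Cs.
Proof.
apply/setP => C; apply/circuitP/idP.
  case=> /indep_ofPn [C' C'Cs C'C] minC.
  have [<- // | neqC] := eqVneq C' C.
  have C'C' : C' \proper C by rewrite properEneq neqC C'C.
  by move/indep_ofP: (minC C' C'C') => /(_ C' C'Cs); rewrite subxx.
move=> CCs; split; first by apply/indep_ofPn; exists C.
move=> D DC; apply/indep_ofP => C' C'Cs; apply/negP => C'D.
have eqC := Cs_antichain C'Cs CCs (subset_trans C'D (proper_sub DC)).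
by move: DC; rewrite -eqC properE C'D andbF.
Qed.

Hypothesis Cs_C3pp : C3pp Cs.

(* A member [C] of [Cs] inside [(C1 - e1) + (C2 - e2)] either avoids [e], or it
   can be eliminated against [C1] within the smaller union [C + C1], which
   misses [e2]; if there is no such [C], (C3)'' applies. *)
Lemma circuit_elimination (C1 C2 : {set E}) e :
  C1 \in Cs -> C2 \in Cs -> C1 != C2 -> e \in C1 :&: C2 ->
  exists2 C3, C3 \in Cs & C3 \subset (C1 :|: C2) :\ e.
Proof.
have [n] := ubnP #|C1 :|: C2|; elim: n C1 C2 => // n IH C1 C2 ltn C1Cs C2Cs neqC eC12.
have [e1 e1C1 e1C2] : exists2 e1, e1 \in C1 & e1 \notin C2.
  by apply/subsetPn; apply: contra neqC => C12; apply/eqP; apply: Cs_antichain.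
have [e2 e2C2 e2C1] : exists2 e2, e2 \in C2 & e2 \notin C1.
  by apply/subsetPn; apply: contra neqC => C21; apply/eqP/esym; apply: Cs_antichain.
set Y := (C1 :\ e1) :|: (C2 :\ e2).
have [/exists_inP [C CCs CY] | /exists_inPn noC] :=
  boolP [exists C in Cs, C \subset Y]; last first.
  have [|| C3 C3Cs [_ C3sub]] := Cs_C3pp C1Cs C2Cs _ _ eC12 noC.
  - by rewrite inE e1C1 e1C2.
  - by rewrite inE e2C2 e2C1.
  by exists C3.
have YC12 : Y \subset C1 :|: C2 by rewrite setUSS ?subD1set.
have [eC | eC] := boolP (e \in C); last first.
  by exists C; rewrite // subsetD1 eC (subset_trans CY YC12).
have e1C : e1 \notin C.
  by apply/negP => /(subsetP CY); rewrite !inE eqxx (negbTE e1C2) andbF.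
have e2C : e2 \notin C.
  by apply/negP => /(subsetP CY); rewrite !inE eqxx (negbTE e2C1) andbF.
have CC1 : C :|: C1 \proper C1 :|: C2.
  apply/properP; split; first by rewrite subUset subsetUl (subset_trans CY YC12).
  by exists e2; rewrite !inE ?e2C2 ?orbT // (negbTE e2C) (negbTE e2C1).
have [|||C3 C3Cs C3sub] := IH C C1 _ CCs C1Cs _ _.
- exact: leq_trans (proper_card CC1) ltn.
- by apply: contraNneq e1C => ->.
- by rewrite inE eC (subsetP (subsetIl _ _) e eC12).
by exists C3; rewrite // (subset_trans C3sub) ?setSD ?proper_sub.
Qed.

Lemma indep_of_exchange (A : {set E}) e f x :
  A \in indep_of Cs -> e \notin f |: A ->
  e |: A \notin indep_of Cs -> f |: A \notin indep_of Cs ->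
  e |: (f |: (A :\ x)) \notin indep_of Cs.
Proof.
move=> indA efA eAdep /indep_ofPn [Cf CfCs CffA].
have [Ce CeCs [eCe CeeA]] := indep_of_setU1_dep indA eAdep.
have CeD1 : Ce :\ x \subset e |: (f |: (A :\ x)).
  by apply: subset_trans (setD1_subsetU1 x CeeA) _; rewrite setUS ?subsetU1.
have CfD1 : Cf :\ x \subset e |: (f |: (A :\ x)).
  exact: subset_trans (setD1_subsetU1 x CffA) (subsetUr _ _).
apply/indep_ofPn.
have [xCe | xCe] := boolP (x \in Ce); last first.
  by exists Ce => //; apply: subset_trans CeD1; rewrite subsetD1 subxx.
have [xCf | xCf] := boolP (x \in Cf); last first.
  by exists Cf => //; apply: subset_trans CfD1; rewrite subsetD1 subxx.
have neqC : Ce != Cf by apply: contraNneq efA => eqC; apply: (subsetP CffA); rewrite -eqC.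
have xCeCf : x \in Ce :&: Cf by rewrite inE xCe xCf.
have [C3 C3Cs C3sub] := circuit_elimination CeCs CfCs neqC xCeCf.
by exists C3; rewrite // (subset_trans C3sub) // setDUl subUset CeD1.
Qed.

(* Induction on [|A - B|]: for [x] in [A - B], augmenting [A - x] and then
   [A' := e + (A - x)] from [B] gives [e] and [f] with [f + A'] independent,
   which [indep_of_exchange] forbids unless [e + A] or [f + A] is independent. *)
Lemma indep_of_augment (A B : {set E}) :
  A \in indep_of Cs -> B \in indep_of Cs -> #|A| < #|B| ->
  exists2 e, e \in B :\: A & e |: A \in indep_of Cs.
Proof.
move=> + indB; have [n] := ubnP #|A :\: B|; elim: n A => // n IH A ltn indA ltAB.
have [AB | /subsetPn [x xA xB]] := boolP (A \subset B).
  have /subsetPn [e eB eA] : ~~ (B \subset A).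
    by apply: contraL ltAB => /subset_leq_card; rewrite leqNgt.
  exists e; first by rewrite inE eA.
  by apply: indep_of_sub indB _; rewrite subUset sub1set eB.
apply/exists_inP/contraT => /exists_inPn noaug.
have ltAx : #|(A :\ x) :\: B| < n.
  rewrite setDDl setUC -setDDl; have := cardsD1 x (A :\: B).
  by rewrite inE xA xB; lia.
have [|e] := IH (A :\ x) ltAx (indep_of_sub indA (subD1set A x)).
  exact: leq_ltn_trans (subset_leq_card (subD1set A x)) ltAB.
move=> + indeAx; rewrite !inE negb_and negbK => /andP [eAx eB].
have ex : e != x by apply: contraNneq xB => <-.
have eA : e \notin A by rewrite (negbTE ex) in eAx.
set A' := e |: (A :\ x).
have cardA' : #|A'| = #|A|.
  by rewrite cardsU1 (cardsD1 x A) xA !inE ex (negbTE eA).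
have ltA'x : #|A' :\: B| < n.
  rewrite /A' setDUl (_ : [set e] :\: B = set0) ?set0U //.
  by apply/eqP; rewrite setD_eq0 sub1set.
have [|f] := IH A' ltA'x indeAx; first by rewrite cardA'.
move=> + indfA'; rewrite !inE negb_or negb_and negbK => /andP [/andP [fe fAx] fB].
have fx : f != x by apply: contraNneq xB => <-.
have fA : f \notin A by rewrite (negbTE fx) in fAx.
have feA : f \notin e |: A by rewrite !inE negb_or fe.
have fBA : f \in B :\: A by rewrite inE fA fB.
have eBA : e \in B :\: A by rewrite inE eA eB.
by move: (indep_of_exchange x indA feA (noaug f fBA) (noaug e eBA)); rewrite indfA'.
Qed.

Lemma indep_of_matroid :
  (forall C : {set E}, C \in Cs -> C != set0) -> is_matroid (indep_of Cs).
Proof.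
move=> Cs_neq0; split.
- by apply/indep_ofP => C CCs; rewrite subset0 Cs_neq0.
- by move=> A B indB AB; apply: indep_of_sub indB AB.
- by move=> A B; apply: indep_of_augment.
Qed.

End IndepOfClutter.

Theorem theorem5p2 (E : finType) (Cs : {set {set E}}) :
  (forall C : {set E}, C \in Cs -> C != set0) ->
  (forall C D : {set E}, C \in Cs -> D \in Cs -> C \subset D -> C = D) ->
  ((exists I : {set {set E}}, is_matroid I /\ circuits I = Cs) <-> C3pp Cs).
Proof.
move=> Cs_neq0 Cs_antichain; split.
  by case=> I [matroid_I <-]; apply: circuits_C3pp.
move=> Cs_C3pp; exists (indep_of Cs); split.
  exact: indep_of_matroid.
exact: circuits_indep_of.
Qed.
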